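(* Let $(\mathcal{M},\mathbf{g})$ be a spherically symmetric spacetime satisfying Einstein's equation $\mathbf{G}=8\pi\mathbf{T}$ with a spherically symmetric perfect-fluid energy-momentum tensor $\mathbf{T}=\varrho\,\underline{\mathbf{u}}\otimes\underline{\mathbf{u}}+p\,(\underline{\mathbf{u}}\otimes\underline{\mathbf{u}}-\mathbf{g})$, with $\varrho+p\neq 0$, and restrict to the region where $\mathrm{d}R$ is spacelike. Then: (i) $E$ is temporally constant iff $p=0$ or $\mathrm{d}R(\mathbf{u})=0$; (ii) $E$ is spatially constant iff $\varrho=0$; (iii) $E_W$ is temporally constant iff $\sigma=0$; (iv) $E_W$ is spatially constant iff $\varrho$ is spatially constant; (v) $E_R$ is temporally (respectively spatially) constant iff $R^3\varrho$ is temporally (respectively spatially) constant.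
   Context: Signature $(+,-,-,-)$. A spherically symmetric spacetime is locally a warped product $\mathcal{M}=\mathcal{B}\times S^2$ with metric $\mathbf{g}=\mathbf{g}_{\mathcal{B}}-R^2\mathbf{g}_{S^2}$, where $(\mathcal{B},\mathbf{g}_{\mathcal{B}})$ is a 2-dimensional Lorentzian manifold and $R$ (areal radius) a positive function on $\mathcal{B}$. The fluid four-velocity $\mathbf{u}$ is a future-pointing unit timelike spherically symmetric vector field (tangent to $\mathcal{B}$), $\underline{\mathbf{u}}=\mathbf{g}(\mathbf{u},\cdot)$, $\varrho$ the density and $p$ the pressure (no equation of state assumed). Let $\mathbf{e}$ be the unit vector field tangent to $\mathcal{B}$, orthogonal to $\mathbf{u}$, pointing in the direction of increasing $R$. A scalar $f$ is called temporally constant if $\mathrm{d}f(\mathbf{u})=0$ and spatially constant if $\mathrm{d}f(\mathbf{e})=0$. The Misner--Sharp energy is $E=-\tfrac12 R^3K=\tfrac{R}{2}\bigl(1+\langle\mathrm{d}R,\mathrm{d}R\rangle\bigr)$, where $K$ is the sectional curvature of the 2-plane tangent to the $SO(3)$-orbit. Decompose the Riemann tensor as $\mathbf{Riem}=\mathbf{Ricci}+\mathbf{Weyl}$ with $\mathbf{Ricci}=(\mathbf{Ric}-\tfrac16\mathrm{Scal}\,\mathbf{g})\odot\mathbf{g}$ ($\odot$ the Kulkarni--Nomizu product, $(\mathbf{a}\odot\mathbf{b})(\mathbf{W},\mathbf{Z},\mathbf{X},\mathbf{Y})=\tfrac12[\mathbf{a}(\mathbf{W},\mathbf{X})\mathbf{b}(\mathbf{Z},\mathbf{Y})-\mathbf{a}(\mathbf{W},\mathbf{Y})\mathbf{b}(\mathbf{Z},\mathbf{X})+\mathbf{b}(\mathbf{W},\mathbf{X})\mathbf{a}(\mathbf{Z},\mathbf{Y})-\mathbf{b}(\mathbf{W},\mathbf{Y})\mathbf{a}(\mathbf{Z},\mathbf{X})]$);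 the Ricci and Weyl parts of the Misner--Sharp energy are $E_R=-\tfrac12R^3K_R$ and $E_W=-\tfrac12R^3K_W$, where $K_R,K_W$ are the sectional curvatures of the orbit-tangent plane computed with $\mathbf{Ricci}$ and $\mathbf{Weyl}$ in place of $\mathbf{Riem}$, so $E=E_R+E_W$. The expansion of $\mathbf{u}$ is $\theta=\mathrm{div}\,\mathbf{u}$ and its shear scalar is $\sigma=\mathrm{d}R(\mathbf{u})/R-\tfrac13\theta$. *)

From Stdlib Require Import Reals List.
From Coquelicot Require Import Coquelicot.
Open Scope R_scope.

(** We work in a local chart of the spacetime M = B x S^2:
    a point is x : nat -> R with x 0, x 1 coordinates on the base B
    (on an open set V of R^2) and x 2 = theta in (0,pi), x 3 = phi the
    standard polar coordinates on S^2.  Only indices 0..3 are used. *)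
Definition pt := nat -> R.

Definition upd (x : pt) (i : nat) (h : R) : pt :=
  fun j => if Nat.eqb j i then h else x j.

Definition pd (i : nat) (f : pt -> R) (x : pt) : R :=
  Derive (fun h => f (upd x i h)) (x i).

Definition sum4 (f : nat -> R) : R := f 0%nat + f 1%nat + f 2%nat + f 3%nat.

(** a spherically symmetric scalar (function on B) lifted to M *)
Definition lift (f : R -> R -> R) : pt -> R := fun x => f (x 0%nat) (x 1%nat).

Fixpoint iterpd (l : list bool) (f : R -> R -> R) : R -> R -> R :=
  match l with
  | nil => f
  | b :: l' =>
      let h := iterpd l' f in
      if b then (fun t r => Derive (fun s => h s r) t)
      else (fun t r => Derive (fun s => h t s) r)
  end.

Definition smooth_on (V : R -> R -> Prop) (f : R -> R -> R) : Prop :=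
  forall (l : list bool) (t r : R), V t r ->
    ex_derive (fun s => iterpd l f s r) t /\
    ex_derive (fun s => iterpd l f t s) r /\
    continuity_2d_pt (iterpd l f) t r.

Definition open2 (V : R -> R -> Prop) : Prop :=
  forall t r, V t r -> exists eps, 0 < eps /\
    forall t' r', Rabs (t' - t) < eps -> Rabs (r' - r) < eps -> V t' r'.

Definition dom4 (V : R -> R -> Prop) (x : pt) : Prop :=
  V (x 0%nat) (x 1%nat) /\ 0 < x 2%nat < PI.

(** * The warped-product metric g = g_B - R^2 g_{S^2}, signature (+,-,-,-),
    g_B = g00 dx0^2 + 2 g01 dx0 dx1 + g11 dx1^2. *)
Definition tensor2 := nat -> nat -> pt -> R.

Definition metric (g00 g01 g11 Rr : R -> R -> R) : tensor2 :=
  fun a b x =>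
    let t := x 0%nat in let r := x 1%nat in
    match a, b with
    | O, O => g00 t r
    | O, S O | S O, O => g01 t r
    | S O, S O => g11 t r
    | 2%nat, 2%nat => - (Rr t r) ^ 2
    | 3%nat, 3%nat => - (Rr t r) ^ 2 * (sin (x 2%nat)) ^ 2
    | _, _ => 0
    end.

Definition metric_inv (g00 g01 g11 Rr : R -> R -> R) : tensor2 :=
  fun a b x =>
    let t := x 0%nat in let r := x 1%nat in
    let dt := g00 t r * g11 t r - g01 t r ^ 2 in
    match a, b with
    | O, O => g11 t r / dt
    | O, S O | S O, O => - g01 t r / dt
    | S O, S O => g00 t r / dt
    | 2%nat, 2%nat => - / (Rr t r) ^ 2
    | 3%nat, 3%nat => - / ((Rr t r) ^ 2 * (sin (x 2%nat)) ^ 2)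
    | _, _ => 0
    end.

Section Curv.
Variables (g gi : tensor2).

Definition Gam (a b c : nat) (x : pt) : R :=
  / 2 * sum4 (fun d => gi a d x *
     (pd b (g d c) x + pd c (g d b) x - pd d (g b c) x)).

(** R^e_{bcd} = components of R(d_c,d_d) d_b,
    R(X,Y)Z = nabla_X nabla_Y Z - nabla_Y nabla_X Z - nabla_[X,Y] Z *)
Definition RiemUp (e b c d : nat) (x : pt) : R :=
  pd c (Gam e d b) x - pd d (Gam e c b) x +
  sum4 (fun f => Gam e c f x * Gam f d b x - Gam e d f x * Gam f c b x).

Definition Riem (a b c d : nat) (x : pt) : R :=
  sum4 (fun e => g a e x * RiemUp e b c d x).

Definition Ric (b d : nat) (x : pt) : R :=
  sum4 (fun a => sum4 (fun c => gi a c x * Riem a b c d x)).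

Definition Scal (x : pt) : R :=
  sum4 (fun b => sum4 (fun d => gi b d x * Ric b d x)).

Definition Ein (a b : nat) (x : pt) : R := Ric a b x - / 2 * Scal x * g a b x.

Definition KN (A B : tensor2) (w z xx y : nat) (p : pt) : R :=
  / 2 * (A w xx p * B z y p - A w y p * B z xx p
         + B w xx p * A z y p - B w y p * A z xx p).

Definition RicciPart (a b c d : nat) (x : pt) : R :=
  KN (fun i j p => Ric i j p - / 6 * Scal p * g i j p) g a b c d x.

Definition WeylPart (a b c d : nat) (x : pt) : R :=
  Riem a b c d x - RicciPart a b c d x.

Definition orbitK (Rm : nat -> nat -> nat -> nat -> pt -> R) (x : pt) : R :=
  Rm 2%nat 3%nat 2%nat 3%nat x /
  (g 2%nat 2%nat x * g 3%nat 3%nat x - g 2%nat 3%nat x ^ 2).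

Definition dir (v : nat -> pt -> R) (f : pt -> R) (x : pt) : R :=
  sum4 (fun a => v a x * pd a f x).

Definition gdot (v w : nat -> pt -> R) (x : pt) : R :=
  sum4 (fun a => sum4 (fun b => g a b x * v a x * w b x)).

Definition codot (f : pt -> R) (x : pt) : R :=
  sum4 (fun a => sum4 (fun b => gi a b x * pd a f x * pd b f x)).

Definition divg (v : nat -> pt -> R) (x : pt) : R :=
  sum4 (fun a => pd a (v a) x + sum4 (fun b => Gam a a b x * v b x)).

Definition lower (v : nat -> pt -> R) (a : nat) (x : pt) : R :=
  sum4 (fun b => g a b x * v b x).

End Curv.

Definition bvec (v0 v1 : R -> R -> R) : nat -> pt -> R :=
  fun a x => match a with
             | O => v0 (x 0%nat) (x 1%nat)
             | S O => v1 (x 0%nat) (x 1%nat)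
             | _ => 0 end.

(** Misner--Sharp energy and its Ricci and Weyl parts *)
Definition MSE (g gi : tensor2) (Rr : R -> R -> R) (x : pt) : R :=
  - / 2 * lift Rr x ^ 3 * orbitK g (Riem g gi) x.
Definition MSE_R (g gi : tensor2) (Rr : R -> R -> R) (x : pt) : R :=
  - / 2 * lift Rr x ^ 3 * orbitK g (RicciPart g gi) x.
Definition MSE_W (g gi : tensor2) (Rr : R -> R -> R) (x : pt) : R :=
  - / 2 * lift Rr x ^ 3 * orbitK g (WeylPart g gi) x.

Definition Tfluid (g : tensor2) (u : nat -> pt -> R) (rho p : pt -> R)
  (a b : nat) (x : pt) : R :=
  rho x * lower g u a x * lower g u b x
  + p x * (lower g u a x * lower g u b x - g a b x).

Definition shear (g gi : tensor2) (u : nat -> pt -> R) (Rr : R -> R -> R) (x : pt) : R :=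
  dir u (lift Rr) x / lift Rr x - / 3 * divg g gi u x.

(* Everything is a finite computation in the chart (t, r, theta, phi).  Every quantity
   involved is a polynomial in the jets of g00, g01, g11, R, u, rho, p, in sin theta,
   cos theta and in the inverses of det g_B, R and sin theta.  Such expressions have a
   verified normal form (polynomial arithmetic modulo R R^-1 = 1, sin sin^-1 = 1 and
   g00 g11 det^-1 = 1 + g01^2 det^-1), and formal differentiation of expressions agrees
   with partial differentiation, so curvature identities are decided by computation.

   In these terms E = R/2 (1 + <dR, dR>), whose gradient along B is
   d_A E = - R^2/2 (G_A^B d_B R - d_A R tr_B G) in terms of the Einstein tensor G.  With
   G = 8 pi T, u a unit vector and e orthogonal to u this gives u(E) = -4 pi R^2 p u(R) and
   e(E) = 4 pi R^2 rho e(R).  Trace-reversing Einstein's equation gives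
   E_R = 4 pi/3 R^3 rho, and the contracted Bianchi identity, contracted with u, gives
   the energy equation u(rho) = -(rho + p) theta.  Hence u(E_W) = -4 pi R^3 (rho + p) sigma
   and e(E_W) = -4 pi/3 R^3 e(rho); each claim is the vanishing of one factor. *)

From Stdlib Require Import Reals List Lia Lra QArith Qreals FunctionalExtensionality.
From Coquelicot Require Import Coquelicot.
Open Scope R_scope.

Lemma iterpd_app (l1 l2 : list bool) (F : R -> R -> R) :
  iterpd (l1 ++ l2) F = iterpd l1 (iterpd l2 F).
Proof. induction l1 as [|b l1 IH]; simpl; [reflexivity|]. rewrite IH. reflexivity. Qed.

Lemma smooth_on_iterpd V F l : smooth_on V F -> smooth_on V (iterpd l F).
Proof. intros H l' t r Hv. rewrite <- iterpd_app. apply H; exact Hv. Qed.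

Lemma open2_locally_2d V t r : open2 V -> V t r -> locally_2d V t r.
Proof.
  intros HO Hv. destruct (HO t r Hv) as [eps [Heps H]].
  exists (mkposreal eps Heps). intros u v Hu Hv'. apply H; assumption.
Qed.

Lemma iterpd_swap V F t r : open2 V -> smooth_on V F -> V t r ->
  iterpd (false :: true :: nil) F t r = iterpd (true :: false :: nil) F t r.
Proof.
  intros HO Hs Hv. simpl. symmetry. apply Schwarz.
  - destruct (open2_locally_2d V t r HO Hv) as [d Hd]. exists d. intros u v Hu Hv'.
    pose proof (Hd u v Hu Hv') as Huv. repeat split.
    + exact (proj1 (Hs nil u v Huv)).
    + exact (proj1 (proj2 (Hs nil u v Huv))).
    + exact (proj1 (Hs (false :: nil) u v Huv)).
    + exact (proj1 (proj2 (Hs (true :: nil) u v Huv))).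
  - exact (proj2 (proj2 (Hs (true :: false :: nil) t r Hv))).
  - exact (proj2 (proj2 (Hs (false :: true :: nil) t r Hv))).
Qed.

Lemma iterpd_cons_ext V F b l1 l2 t r : open2 V ->
  (forall t r, V t r -> iterpd l1 F t r = iterpd l2 F t r) -> V t r ->
  iterpd (b :: l1) F t r = iterpd (b :: l2) F t r.
Proof.
  intros HO H Hv. destruct (HO t r Hv) as [eps [Heps Hb]].
  destruct b; simpl; apply Derive_ext_loc; exists (mkposreal eps Heps); intros z Hz;
    apply H, Hb; try exact Hz; rewrite Rminus_eq_0, Rabs_R0; exact Heps.
Qed.

Lemma iterpd_push_false V F i L t r : open2 V -> smooth_on V F -> V t r ->
  iterpd (false :: repeat true i ++ L) F t r = iterpd (repeat true i ++ false :: L) F t r.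
Proof.
  intros HO Hs. revert t r. induction i as [|i IH]; intros t r Hv; [reflexivity|].
  simpl repeat. simpl app.
  transitivity (iterpd (true :: false :: repeat true i ++ L) F t r).
  - rewrite (iterpd_app (false :: true :: nil) (repeat true i ++ L)).
    rewrite (iterpd_app (true :: false :: nil) (repeat true i ++ L)).
    apply (iterpd_swap V); [exact HO | apply smooth_on_iterpd; exact Hs | exact Hv].
  - apply (iterpd_cons_ext V); [exact HO | exact IH | exact Hv].
Qed.

(** [jet F i j] is the mixed partial derivative [d_t^i d_r^j F]. *)
Definition jet (F : R -> R -> R) (i j : nat) : R -> R -> R :=
  iterpd (repeat true i ++ repeat false j) F.

Lemma Derive_jet_r V F i j t r : open2 V -> smooth_on V F -> V t r ->
  Derive (fun s => jet F i j t s) r = jet F i (S j) t r.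
Proof.
  intros HO Hs Hv. unfold jet. change (repeat false (S j)) with (false :: repeat false j).
  rewrite <- (iterpd_push_false V F i (repeat false j) t r HO Hs Hv). reflexivity.
Qed.

Lemma ex_derive_jet_t V F i j t r : smooth_on V F -> V t r -> ex_derive (fun s => jet F i j s r) t.
Proof. intros Hs Hv. exact (proj1 (Hs _ t r Hv)). Qed.

Lemma ex_derive_jet_r V F i j t r : smooth_on V F -> V t r -> ex_derive (fun s => jet F i j t s) r.
Proof. intros Hs Hv. exact (proj1 (proj2 (Hs _ t r Hv))). Qed.

Lemma Q2R_0 : Q2R 0 = 0.
Proof. unfold Q2R. simpl. ring. Qed.

Lemma Q2R_int (z : Z) : Q2R (z # 1) = IZR z.
Proof. unfold Q2R. simpl. field. Qed.

Lemma Q2R_1 : Q2R 1 = 1.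
Proof. exact (Q2R_int 1). Qed.

Lemma Q2R_half : Q2R (1 # 2) = / 2.
Proof. unfold Q2R. simpl. field. Qed.

Lemma Q2R_mhalf : Q2R (-1 # 2) = - / 2.
Proof. unfold Q2R. simpl. field. Qed.

Lemma Q2R_Qeq_bool_0 c : Qeq_bool c 0 = true -> Q2R c = 0.
Proof. intros H. apply Qeq_bool_eq, Qeq_eqR in H. rewrite H. apply Q2R_0. Qed.

Lemma Q2R_Qred c : Q2R (Qred c) = Q2R c.
Proof. apply Qeq_eqR, Qred_correct. Qed.

(** Jets refer to the slots of an environment; slots 0, 1, 2, 3 always hold
    [g00], [g01], [g11] and the areal radius, which gives meaning to the
    atoms [XInvDet] (inverse of [g00 g11 - g01^2]) and [XInvR]. *)
Inductive expr :=
| XJet (f i j : nat)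
| XNum (c : Q)
| XPi | XSin | XCos | XInvDet | XInvR | XInvSin
| XAdd (a b : expr) | XMul (a b : expr) | XOpp (a : expr).

Declare Scope expr_scope.
Delimit Scope expr_scope with X.
Bind Scope expr_scope with expr.
Infix "+" := XAdd : expr_scope.
Infix "*" := XMul : expr_scope.
Notation "- a" := (XOpp a) : expr_scope.
Notation "a - b" := (XAdd a (XOpp b)) : expr_scope.

Definition env := nat -> R -> R -> R.

Definition det_base (E : env) (y : pt) : R :=
  E 0%nat (y 0%nat) (y 1%nat) * E 2%nat (y 0%nat) (y 1%nat)
  - E 1%nat (y 0%nat) (y 1%nat) * E 1%nat (y 0%nat) (y 1%nat).

Fixpoint eval (E : env) (e : expr) (y : pt) : R :=
  match e with
  | XJet f i j => jet (E f) i j (y 0%nat) (y 1%nat)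
  | XNum c => Q2R c
  | XPi => PI
  | XSin => sin (y 2%nat)
  | XCos => cos (y 2%nat)
  | XInvDet => / det_base E y
  | XInvR => / E 3%nat (y 0%nat) (y 1%nat)
  | XInvSin => / sin (y 2%nat)
  | XAdd a b => eval E a y + eval E b y
  | XMul a b => eval E a y * eval E b y
  | XOpp a => - eval E a y
  end.

Definition djet (k f i j : nat) : expr :=
  match k with O => XJet f (S i) j | S O => XJet f i (S j) | _ => XNum 0 end.

Definition dsin (k : nat) : expr := match k with 2%nat => XCos | _ => XNum 0 end.
Definition dcos (k : nat) : expr := match k with 2%nat => - XSin | _ => XNum 0 end.

Fixpoint dexpr (k : nat) (e : expr) : expr :=
  match e with
  | XJet f i j => djet k f i j
  | XNum _ | XPi => XNum 0
  | XSin => dsin k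
  | XCos => dcos k
  | XInvDet =>
      - ((djet k 0 0 0 * XJet 2 0 0 + XJet 0 0 0 * djet k 2 0 0
          - (djet k 1 0 0 * XJet 1 0 0 + XJet 1 0 0 * djet k 1 0 0)) * (XInvDet * XInvDet))
  | XInvR => - (djet k 3 0 0 * (XInvR * XInvR))
  | XInvSin => - (dsin k * (XInvSin * XInvSin))
  | XAdd a b => dexpr k a + dexpr k b
  | XMul a b => dexpr k a * b + a * dexpr k b
  | XOpp a => - dexpr k a
  end.

Fixpoint admissible (V : R -> R -> Prop) (E : env) (e : expr) (y : pt) : Prop :=
  match e with
  | XJet f _ _ => smooth_on V (E f)
  | XInvDet =>
      smooth_on V (E 0%nat) /\ smooth_on V (E 1%nat) /\ smooth_on V (E 2%nat) /\ det_base E y <> 0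
  | XInvR => smooth_on V (E 3%nat) /\ E 3%nat (y 0%nat) (y 1%nat) <> 0
  | XInvSin => sin (y 2%nat) <> 0
  | XAdd a b | XMul a b => admissible V E a y /\ admissible V E b y
  | XOpp a => admissible V E a y
  | _ => True
  end.

Definition is_pd (f : pt -> R) (k : nat) (y : pt) (v : R) : Prop :=
  ex_derive (fun h => f (upd y k h)) (y k) /\ Derive (fun h => f (upd y k h)) (y k) = v.

Lemma upd_id (y : pt) (k : nat) : upd y k (y k) = y.
Proof.
  apply functional_extensionality. intros j. unfold upd.
  destruct (Nat.eqb_spec j k); subst; reflexivity.
Qed.

Lemma is_pd_const f k y : (forall h, f (upd y k h) = f y) -> is_pd f k y 0.
Proof.
  intros H. unfold is_pd. split.
  - apply (ex_derive_ext (fun _ => f y)); [intros h; symmetry; apply H | apply ex_derive_const].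
  - rewrite (Derive_ext _ (fun _ => f y)) by apply H. apply Derive_const.
Qed.

Lemma is_pd_plus f g k y a b :
  is_pd f k y a -> is_pd g k y b -> is_pd (fun z => f z + g z) k y (a + b).
Proof.
  intros [Ef Df] [Eg Dg]. split; [exact (ex_derive_plus _ _ _ Ef Eg)|].
  cbv beta. rewrite Derive_plus by assumption. rewrite Df, Dg. reflexivity.
Qed.

Lemma is_pd_mult f g k y a b :
  is_pd f k y a -> is_pd g k y b -> is_pd (fun z => f z * g z) k y (a * g y + f y * b).
Proof.
  intros [Ef Df] [Eg Dg]. split; [exact (ex_derive_mult _ _ _ Ef Eg)|].
  cbv beta. rewrite Derive_mult by assumption. rewrite Df, Dg, upd_id. reflexivity.
Qed.

Lemma is_pd_opp f k y a : is_pd f k y a -> is_pd (fun z => - f z) k y (- a).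
Proof.
  intros [Ef Df]. split; [exact (ex_derive_opp _ _ Ef)|].
  cbv beta. rewrite Derive_opp, Df. reflexivity.
Qed.

Lemma is_pd_inv f k y a : is_pd f k y a -> f y <> 0 ->
  is_pd (fun z => / f z) k y (- (a * (/ f y * / f y))).
Proof.
  intros [Ef Df] Hn. rewrite <- (upd_id y k) in Hn. split; [exact (ex_derive_inv _ _ Ef Hn)|].
  cbv beta. rewrite Derive_inv, Df by assumption. rewrite upd_id. field.
  rewrite upd_id in Hn. exact Hn.
Qed.

Lemma is_pd_sin E k y : is_pd (fun z => sin (z 2%nat)) k y (eval E (dsin k) y).
Proof.
  destruct k as [|[|[|k]]].
  3: split; cbn [upd Nat.eqb eval dsin];
       [eexists; apply is_derive_sin | apply is_derive_unique, is_derive_sin].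
  all: cbn [eval dsin dcos]; rewrite Q2R_0; apply is_pd_const; reflexivity.
Qed.

Lemma is_pd_cos E k y : is_pd (fun z => cos (z 2%nat)) k y (eval E (dcos k) y).
Proof.
  destruct k as [|[|[|k]]].
  3: split; cbn [upd Nat.eqb eval dcos];
       [eexists; apply is_derive_cos | apply is_derive_unique, is_derive_cos].
  all: cbn [eval dsin dcos]; rewrite Q2R_0; apply is_pd_const; reflexivity.
Qed.

Section FormalDerivative.
Variables (V : R -> R -> Prop) (E : env).
Hypothesis HO : open2 V.

Lemma is_pd_jet f i j k y : dom4 V y -> smooth_on V (E f) ->
  is_pd (eval E (XJet f i j)) k y (eval E (djet k f i j) y).
Proof.
  intros [Hv _] Hs. destruct k as [|[|k]]; simpl.
  - split; unfold upd; simpl; [apply (ex_derive_jet_t V); auto | reflexivity].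
  - split; unfold upd; simpl; [apply (ex_derive_jet_r V); auto | apply (Derive_jet_r V); auto].
  - rewrite Q2R_0. apply is_pd_const. reflexivity.
Qed.

Lemma is_pd_eval e k y : dom4 V y -> admissible V E e y -> is_pd (eval E e) k y (eval E (dexpr k e) y).
Proof.
  intros Hd. induction e as [f i j|c| | | | | | |a IHa b IHb|a IHa b IHb|a IHa]; intros Hw;
    simpl in Hw.
  - apply is_pd_jet; auto.
  - simpl. rewrite Q2R_0. apply is_pd_const. reflexivity.
  - simpl. rewrite Q2R_0. apply is_pd_const. reflexivity.
  - apply is_pd_sin.
  - apply is_pd_cos.
  - destruct Hw as [S0 [S1 [S2 Hn]]].
    pose proof (is_pd_jet 0 0 0 k y Hd S0) as D0.
    pose proof (is_pd_jet 1 0 0 k y Hd S1) as D1.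
    pose proof (is_pd_jet 2 0 0 k y Hd S2) as D2.
    exact (is_pd_inv _ _ _ _ (is_pd_plus _ _ _ _ _ _ (is_pd_mult _ _ _ _ _ _ D0 D2)
             (is_pd_opp _ _ _ _ (is_pd_mult _ _ _ _ _ _ D1 D1))) Hn).
  - destruct Hw as [S3 Hn].
    exact (is_pd_inv _ _ _ _ (is_pd_jet 3 0 0 k y Hd S3) Hn).
  - exact (is_pd_inv _ _ _ _ (is_pd_sin E k y) Hw).
  - destruct Hw as [Ha Hb]. exact (is_pd_plus _ _ _ _ _ _ (IHa Ha) (IHb Hb)).
  - destruct Hw as [Ha Hb]. exact (is_pd_mult _ _ _ _ _ _ (IHa Ha) (IHb Hb)).
  - exact (is_pd_opp _ _ _ _ (IHa Hw)).
Qed.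

Lemma pd_eval e k y : dom4 V y -> admissible V E e y -> pd k (eval E e) y = eval E (dexpr k e) y.
Proof. intros Hd Hw. exact (proj2 (is_pd_eval e k y Hd Hw)). Qed.

Lemma dom4_locally y k : dom4 V y -> locally (y k) (fun h => dom4 V (upd y k h)).
Proof.
  intros [Hv [H1 H2]]. destruct k as [|[|[|k]]].
  - destruct (HO _ _ Hv) as [eps [Heps Hb]].
    exists (mkposreal eps Heps). intros z Hz. split; [|exact (conj H1 H2)].
    apply Hb; [exact Hz|]. rewrite Rminus_eq_0, Rabs_R0. exact Heps.
  - destruct (HO _ _ Hv) as [eps [Heps Hb]].
    exists (mkposreal eps Heps). intros z Hz. split; [|exact (conj H1 H2)].
    apply Hb; [|exact Hz]. rewrite Rminus_eq_0, Rabs_R0. exact Heps.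
  - assert (Heps : 0 < Rmin (y 2%nat) (PI - y 2%nat)) by (apply Rmin_glb_lt; lra).
    exists (mkposreal _ Heps). intros z Hz. split; [exact Hv|]. unfold upd; simpl.
    unfold ball in Hz; simpl in Hz; unfold AbsRing_ball, abs, minus, plus, opp in Hz; simpl in Hz.
    apply Rabs_def2 in Hz.
    pose proof (Rmin_l (y 2%nat) (PI - y 2%nat)). pose proof (Rmin_r (y 2%nat) (PI - y 2%nat)).
    lra.
  - exists (mkposreal 1 Rlt_0_1). intros z Hz. exact (conj Hv (conj H1 H2)).
Qed.

Lemma pd_ext_dom (f f' : pt -> R) y k : dom4 V y ->
  (forall z, dom4 V z -> f z = f' z) -> pd k f y = pd k f' y.
Proof.
  intros Hd H. unfold pd. apply Derive_ext_loc.
  generalize (dom4_locally y k Hd). apply filter_imp. intros h Hh. apply H, Hh.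
Qed.

End FormalDerivative.

(* Keeps [simpl] from unfolding the rational coefficients of normal forms. *)
Arguments Qred : simpl never.
Arguments Qplus : simpl never.
Arguments Qmult : simpl never.
Arguments Qeq_bool : simpl never.

Inductive atom := AInvDet | AInvR | AInvSin | ASin | ACos | APi | AJet (f i j : nat).

Definition atom_rank (a : atom) : nat :=
  match a with
  | AInvDet => 0 | AInvR => 1 | AInvSin => 2 | ASin => 3 | ACos => 4 | APi => 5 | AJet _ _ _ => 6
  end.

Definition atom_cmp (a b : atom) : comparison :=
  match a, b with
  | AJet f i j, AJet f' i' j' =>
      match Nat.compare f f' with
      | Eq => match Nat.compare i i' with Eq => Nat.compare j j' | c => c end
      | c => c
      end
  | _, _ => Nat.compare (atom_rank a) (atom_rank b)
  end.

Lemma atom_cmp_eq a b : atom_cmp a b = Eq -> a = b.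
Proof.
  destruct a, b; simpl; intros H; try discriminate; auto.
  destruct (Nat.compare f f0) eqn:E1; try discriminate.
  destruct (Nat.compare i i0) eqn:E2; try discriminate.
  apply Nat.compare_eq in E1, E2, H. subst. reflexivity.
Qed.

Definition mono := list atom.
Definition poly := list (mono * Q).

Fixpoint mono_insert (a : atom) (m : mono) : mono :=
  match m with
  | nil => a :: nil
  | b :: m' => match atom_cmp a b with Gt => b :: mono_insert a m' | _ => a :: m end
  end.

Definition mono_mul (m1 m2 : mono) : mono := fold_right mono_insert m2 m1.

Fixpoint mono_cmp (m1 m2 : mono) : comparison :=
  match m1, m2 with
  | nil, nil => Eq
  | nil, _ => Lt
  | _, nil => Gt
  | a :: r, b :: s => match atom_cmp a b with Eq => mono_cmp r s | c => c end
  end.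

Lemma mono_cmp_eq m1 m2 : mono_cmp m1 m2 = Eq -> m1 = m2.
Proof.
  revert m2; induction m1 as [|a m1 IH]; destruct m2 as [|b m2]; simpl; intros H;
    try discriminate; auto.
  destruct (atom_cmp a b) eqn:Ea; try discriminate. apply atom_cmp_eq in Ea. subst. f_equal. auto.
Qed.

Fixpoint poly_insert (m : mono) (c : Q) (p : poly) : poly :=
  match p with
  | nil => if Qeq_bool c 0 then nil else (m, c) :: nil
  | (m', c') :: p' =>
      match mono_cmp m m' with
      | Lt => if Qeq_bool c 0 then p else (m, c) :: p
      | Eq => if Qeq_bool (Qred (c + c')) 0 then p' else (m, Qred (c + c')) :: p'
      | Gt => (m', c') :: poly_insert m c p'
      end
  end.

Definition poly_add (p q : poly) : poly :=
  fold_right (fun t acc => poly_insert (fst t) (snd t) acc) q p.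

Definition poly_scale (c : Q) (p : poly) : poly := map (fun t => (fst t, Qred (c * snd t))) p.

Definition atom_mem (a : atom) (m : mono) : bool :=
  existsb (fun b => match atom_cmp a b with Eq => true | _ => false end) m.

Fixpoint atom_remove (a : atom) (m : mono) : mono :=
  match m with
  | nil => nil
  | b :: m' => match atom_cmp a b with Eq => m' | _ => b :: atom_remove a m' end
  end.

(** Rewrites a monomial with [R R^-1 = 1], [sin sin^-1 = 1] and
    [g00 g11 det^-1 = 1 + g01^2 det^-1]; the fuel only bounds the work. *)
Fixpoint mono_reduce (fuel : nat) (m : mono) (c : Q) : poly :=
  match fuel with
  | O => poly_insert m c nil
  | S fuel' =>
    if atom_mem AInvR m && atom_mem (AJet 3 0 0) m then
      mono_reduce fuel' (atom_remove AInvR (atom_remove (AJet 3 0 0) m)) c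
    else if atom_mem AInvSin m && atom_mem ASin m then
      mono_reduce fuel' (atom_remove AInvSin (atom_remove ASin m)) c
    else if atom_mem AInvDet m && atom_mem (AJet 0 0 0) m && atom_mem (AJet 2 0 0) m then
      let m' := atom_remove AInvDet (atom_remove (AJet 0 0 0) (atom_remove (AJet 2 0 0) m)) in
      poly_add (mono_reduce fuel' m' c)
        (mono_reduce fuel'
           (mono_insert AInvDet (mono_insert (AJet 1 0 0) (mono_insert (AJet 1 0 0) m'))) c)
    else poly_insert m c nil
  end.

Definition poly_mul_mono (m : mono) (c : Q) (p : poly) : poly :=
  fold_right (fun t acc =>
    let m' := mono_mul m (fst t) in
    poly_add (mono_reduce (2 * length m' + 2) m' (Qred (c * snd t))) acc) nil p.

Definition poly_mul (p q : poly) : poly :=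
  fold_right (fun t acc => poly_add (poly_mul_mono (fst t) (snd t) q) acc) nil p.

Fixpoint normalize (e : expr) : poly :=
  match e with
  | XJet f i j => (AJet f i j :: nil, 1%Q) :: nil
  | XNum c => poly_insert nil (Qred c) nil
  | XPi => (APi :: nil, 1%Q) :: nil
  | XSin => (ASin :: nil, 1%Q) :: nil
  | XCos => (ACos :: nil, 1%Q) :: nil
  | XInvDet => (AInvDet :: nil, 1%Q) :: nil
  | XInvR => (AInvR :: nil, 1%Q) :: nil
  | XInvSin => (AInvSin :: nil, 1%Q) :: nil
  | XAdd a b => poly_add (normalize a) (normalize b)
  | XMul a b => poly_mul (normalize a) (normalize b)
  | XOpp a => poly_scale (-1) (normalize a)
  end.

Definition atom_expr (a : atom) : expr :=
  match a with
  | AInvDet => XInvDet | AInvR => XInvR | AInvSin => XInvSin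
  | ASin => XSin | ACos => XCos | APi => XPi | AJet f i j => XJet f i j
  end.

Definition mono_expr (m : mono) : expr := fold_right (fun a r => atom_expr a * r)%X (XNum 1) m.

Definition poly_expr (p : poly) : expr :=
  fold_right (fun t r => XNum (snd t) * mono_expr (fst t) + r)%X (XNum 0) p.

Definition simplify (e : expr) : expr := poly_expr (normalize e).

Definition expr_eqb (a b : expr) : bool :=
  match normalize (a - b)%X with nil => true | _ => false end.

Section Soundness.
Variables (E : env) (y : pt).

Definition eval_mono (m : mono) : R := eval E (mono_expr m) y.
Definition eval_poly (p : poly) : R := eval E (poly_expr p) y.

Lemma eval_mono_nil : eval_mono nil = 1.
Proof. exact Q2R_1. Qed.

Lemma eval_poly_nil : eval_poly nil = 0.
Proof. exact Q2R_0. Qed.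

Lemma eval_mono_cons a m : eval_mono (a :: m) = eval E (atom_expr a) y * eval_mono m.
Proof. reflexivity. Qed.

Lemma eval_poly_cons m c p : eval_poly ((m, c) :: p) = Q2R c * eval_mono m + eval_poly p.
Proof. reflexivity. Qed.

Lemma eval_mono_insert a m : eval_mono (mono_insert a m) = eval E (atom_expr a) y * eval_mono m.
Proof.
  induction m as [|b m IH]; simpl; [reflexivity|].
  destruct (atom_cmp a b); rewrite ?eval_mono_cons, ?IH; try reflexivity. ring.
Qed.

Lemma eval_mono_mul m1 m2 : eval_mono (mono_mul m1 m2) = eval_mono m1 * eval_mono m2.
Proof.
  induction m1 as [|a m1 IH]; simpl.
  - rewrite eval_mono_nil. ring.
  - rewrite eval_mono_insert, IH, eval_mono_cons. ring.
Qed.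

Lemma eval_poly_insert m c p : eval_poly (poly_insert m c p) = Q2R c * eval_mono m + eval_poly p.
Proof.
  induction p as [|[m' c'] p IH]; simpl.
  - destruct (Qeq_bool c 0) eqn:Hc.
    + rewrite (Q2R_Qeq_bool_0 c Hc). ring.
    + rewrite eval_poly_cons. reflexivity.
  - destruct (mono_cmp m m') eqn:Hm.
    + apply mono_cmp_eq in Hm. subst m'.
      destruct (Qeq_bool (Qred (c + c')) 0) eqn:Hc.
      * pose proof (Q2R_Qeq_bool_0 _ Hc) as H0. rewrite Q2R_Qred, Q2R_plus in H0.
        rewrite eval_poly_cons. replace (Q2R c') with (- Q2R c) by lra. ring.
      * rewrite !eval_poly_cons, Q2R_Qred, Q2R_plus. ring.
    + destruct (Qeq_bool c 0) eqn:Hc.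
      * rewrite (Q2R_Qeq_bool_0 c Hc). ring.
      * rewrite eval_poly_cons. reflexivity.
    + rewrite !eval_poly_cons, IH. ring.
Qed.

Lemma eval_poly_add p q : eval_poly (poly_add p q) = eval_poly p + eval_poly q.
Proof.
  induction p as [|[m c] p IH]; simpl.
  - rewrite eval_poly_nil. ring.
  - rewrite eval_poly_insert, IH, eval_poly_cons. ring.
Qed.

Lemma eval_poly_scale c p : eval_poly (poly_scale c p) = Q2R c * eval_poly p.
Proof.
  induction p as [|[m c'] p IH]; simpl.
  - rewrite eval_poly_nil. ring.
  - rewrite !eval_poly_cons, IH, Q2R_Qred, Q2R_mult. ring.
Qed.

Lemma atom_mem_remove a b m : atom_cmp a b <> Eq -> atom_mem a m = true ->
  atom_mem a (atom_remove b m) = true.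
Proof.
  intros Hab. induction m as [|x m IH]; simpl; [auto|].
  destruct (atom_cmp b x) eqn:Hbx; simpl; intros H; apply Bool.orb_true_iff in H;
    try (apply Bool.orb_true_iff; destruct H as [H|H]; auto).
  apply atom_cmp_eq in Hbx. subst x. destruct H as [H|H]; auto.
  destruct (atom_cmp a b); congruence.
Qed.

Lemma eval_mono_remove a m : atom_mem a m = true ->
  eval E (atom_expr a) y * eval_mono (atom_remove a m) = eval_mono m.
Proof.
  induction m as [|b m IH]; simpl; intros H; [discriminate|].
  destruct (atom_cmp a b) eqn:Hab.
  - apply atom_cmp_eq in Hab; subst. reflexivity.
  - rewrite !eval_mono_cons, <- IH by exact H. ring.
  - rewrite !eval_mono_cons, <- IH by exact H. ring.
Qed.

Definition regular_at : Prop :=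
  det_base E y <> 0 /\ E 3%nat (y 0%nat) (y 1%nat) <> 0 /\ sin (y 2%nat) <> 0.

Hypothesis Hreg : regular_at.

Lemma eval_mono_reduce fuel m c : eval_poly (mono_reduce fuel m c) = Q2R c * eval_mono m.
Proof.
  destruct Hreg as [HnD [HnR HnS]].
  revert m c; induction fuel as [|fuel IH]; intros m c; cbn [mono_reduce].
  { rewrite eval_poly_insert, eval_poly_nil. ring. }
  destruct (atom_mem AInvR m && atom_mem (AJet 3 0 0) m) eqn:H1.
  { apply andb_prop in H1. destruct H1 as [H1a H1b]. rewrite IH. f_equal.
    rewrite <- (eval_mono_remove (AJet 3 0 0) m H1b).
    rewrite <- (eval_mono_remove AInvR (atom_remove (AJet 3 0 0) m))
      by (apply atom_mem_remove; [discriminate | exact H1a]).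
    simpl. unfold jet. simpl. field. exact HnR. }
  destruct (atom_mem AInvSin m && atom_mem ASin m) eqn:H2.
  { apply andb_prop in H2. destruct H2 as [H2a H2b]. rewrite IH. f_equal.
    rewrite <- (eval_mono_remove ASin m H2b).
    rewrite <- (eval_mono_remove AInvSin (atom_remove ASin m))
      by (apply atom_mem_remove; [discriminate | exact H2a]).
    simpl. field. exact HnS. }
  destruct (atom_mem AInvDet m && atom_mem (AJet 0 0 0) m && atom_mem (AJet 2 0 0) m) eqn:H3.
  { apply andb_prop in H3. destruct H3 as [H3 H3c]. apply andb_prop in H3. destruct H3 as [H3a H3b].
    rewrite eval_poly_add, !IH, !eval_mono_insert.
    rewrite <- (eval_mono_remove (AJet 2 0 0) m H3c).
    rewrite <- (eval_mono_remove (AJet 0 0 0) (atom_remove (AJet 2 0 0) m))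
      by (apply atom_mem_remove; [discriminate | exact H3b]).
    rewrite <- (eval_mono_remove AInvDet (atom_remove (AJet 0 0 0) (atom_remove (AJet 2 0 0) m)))
      by (do 2 (apply atom_mem_remove; [discriminate|]); exact H3a).
    unfold det_base in HnD. simpl. unfold det_base, jet. simpl. field. exact HnD. }
  rewrite eval_poly_insert, eval_poly_nil. ring.
Qed.

Lemma eval_poly_mul_mono m c p : eval_poly (poly_mul_mono m c p) = Q2R c * eval_mono m * eval_poly p.
Proof.
  induction p as [|[m' c'] p IH]; simpl.
  - rewrite eval_poly_nil. ring.
  - rewrite eval_poly_add, IH, eval_mono_reduce, Q2R_Qred, Q2R_mult, eval_mono_mul, eval_poly_cons.
    ring.
Qed.

Lemma eval_poly_mul p q : eval_poly (poly_mul p q) = eval_poly p * eval_poly q.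
Proof.
  induction p as [|[m c] p IH]; simpl.
  - rewrite eval_poly_nil. ring.
  - rewrite eval_poly_add, IH, eval_poly_mul_mono, eval_poly_cons. ring.
Qed.

Lemma eval_normalize e : eval_poly (normalize e) = eval E e y.
Proof.
  induction e; cbn [normalize eval];
    try (cbn [eval_poly poly_expr mono_expr fold_right fst snd eval atom_expr];
         rewrite Q2R_1, Q2R_0; ring).
  - rewrite eval_poly_insert, Q2R_Qred, eval_mono_nil, eval_poly_nil. ring.
  - rewrite eval_poly_add, IHe1, IHe2. reflexivity.
  - rewrite eval_poly_mul, IHe1, IHe2. reflexivity.
  - rewrite eval_poly_scale, IHe. unfold Q2R. simpl. field.
Qed.

Lemma eval_simplify e : eval E (simplify e) y = eval E e y.
Proof. exact (eval_normalize e). Qed.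

Lemma expr_eqb_sound a b : expr_eqb a b = true -> eval E a y = eval E b y.
Proof.
  unfold expr_eqb. intros H. pose proof (eval_normalize (a - b)%X) as Hn.
  destruct (normalize (a - b)%X); [|discriminate].
  rewrite eval_poly_nil in Hn. simpl in Hn. lra.
Qed.

End Soundness.

Definition sum4X (f : nat -> expr) : expr := (f 0%nat + f 1%nat + f 2%nat + f 3%nat)%X.
Definition sum2X (f : nat -> expr) : expr := (f 0%nat + f 1%nat)%X.

Definition metricX (a b : nat) : expr :=
  match a, b with
  | 0, 0 => XJet 0 0 0
  | 0, 1 | 1, 0 => XJet 1 0 0
  | 1, 1 => XJet 2 0 0
  | 2, 2 => (- (XJet 3 0 0 * XJet 3 0 0))%X
  | 3, 3 => (- (XJet 3 0 0 * XJet 3 0 0 * (XSin * XSin)))%X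
  | _, _ => XNum 0
  end%nat.

Definition metric_invX (a b : nat) : expr :=
  match a, b with
  | 0, 0 => (XJet 2 0 0 * XInvDet)%X
  | 0, 1 | 1, 0 => (- (XJet 1 0 0 * XInvDet))%X
  | 1, 1 => (XJet 0 0 0 * XInvDet)%X
  | 2, 2 => (- (XInvR * XInvR))%X
  | 3, 3 => (- (XInvR * XInvR * (XInvSin * XInvSin)))%X
  | _, _ => XNum 0
  end%nat.

Definition christoffelX (a b c : nat) : expr :=
  (XNum (1 # 2) * sum4X (fun d => metric_invX a d *
     (dexpr b (metricX d c) + dexpr c (metricX d b) - dexpr d (metricX b c))))%X.

Definition idx4 : list nat := (0 :: 1 :: 2 :: 3 :: nil)%nat.

Lemma nth_map_idx4 {A} (f : nat -> A) d a : (a < 4)%nat -> nth a (map f idx4) d = f a.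
Proof. intros Ha. destruct a as [|[|[|[|a]]]]; try reflexivity. lia. Qed.

(* Normal forms are tabulated once, at definition time, so that the identities
   checked below do not recompute them. *)
Definition christoffel_table : list (list (list expr)) :=
  Eval vm_compute in
  map (fun a => map (fun b => map (fun c => simplify (christoffelX a b c)) idx4) idx4) idx4.

Definition christoffel_nf (a b c : nat) : expr :=
  nth c (nth b (nth a christoffel_table nil) nil) (XNum 0).

Lemma christoffel_table_eq : christoffel_table =
  map (fun a => map (fun b => map (fun c => simplify (christoffelX a b c)) idx4) idx4) idx4.
Proof. vm_compute. reflexivity. Qed.

Lemma christoffel_nf_eq a b c : (a < 4)%nat -> (b < 4)%nat -> (c < 4)%nat ->
  christoffel_nf a b c = simplify (christoffelX a b c).
Proof. intros. unfold christoffel_nf. rewrite christoffel_table_eq, !nth_map_idx4; auto. Qed.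

Definition riem_upX (e b c d : nat) : expr :=
  (dexpr c (christoffel_nf e d b) - dexpr d (christoffel_nf e c b)
   + sum4X (fun f => christoffel_nf e c f * christoffel_nf f d b
                     - christoffel_nf e d f * christoffel_nf f c b))%X.

Definition riemX (a b c d : nat) : expr := sum4X (fun e => metricX a e * riem_upX e b c d)%X.

Definition ricciX (b d : nat) : expr :=
  sum4X (fun a => sum4X (fun c => metric_invX a c * riemX a b c d))%X.

Definition ricci_table : list (list expr) :=
  Eval vm_compute in map (fun b => map (fun d => simplify (ricciX b d)) idx4) idx4.

Definition ricci_nf (b d : nat) : expr := nth d (nth b ricci_table nil) (XNum 0).

Lemma ricci_table_eq : ricci_table = map (fun b => map (fun d => simplify (ricciX b d)) idx4) idx4.
Proof. vm_compute. reflexivity. Qed.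

Lemma ricci_nf_eq b d : (b < 4)%nat -> (d < 4)%nat -> ricci_nf b d = simplify (ricciX b d).
Proof. intros. unfold ricci_nf. rewrite ricci_table_eq, !nth_map_idx4; auto. Qed.

Definition traceX (T : nat -> nat -> expr) : expr :=
  sum4X (fun b => sum4X (fun d => metric_invX b d * T b d))%X.

Definition scal_nf : expr := Eval vm_compute in simplify (traceX ricci_nf).

Lemma scal_nf_eq : scal_nf = simplify (traceX ricci_nf).
Proof. vm_compute. reflexivity. Qed.

Definition einstein_nf (a b : nat) : expr :=
  (ricci_nf a b - XNum (1 # 2) * scal_nf * metricX a b)%X.

Fixpoint jets_below (n : nat) (e : expr) : bool :=
  match e with
  | XJet f _ _ => Nat.ltb f n
  | XAdd a b | XMul a b => jets_below n a && jets_below n b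
  | XOpp a => jets_below n a
  | _ => true
  end.

Lemma forallb_nth {A} (P : A -> bool) l d n : forallb P l = true -> P d = true -> P (nth n l d) = true.
Proof.
  intros Hl Hd. destruct (Nat.lt_ge_cases n (length l)) as [Hn|Hn].
  - rewrite forallb_forall in Hl. apply Hl, nth_In, Hn.
  - rewrite nth_overflow by exact Hn. exact Hd.
Qed.

Lemma christoffel_nf_jets a b c : jets_below 8 (christoffel_nf a b c) = true.
Proof.
  apply forallb_nth; [|reflexivity]. apply (forallb_nth (forallb (jets_below 8))); [|reflexivity].
  apply (forallb_nth (forallb (forallb (jets_below 8)))); [|reflexivity].
  vm_compute. reflexivity.
Qed.

Lemma einstein_nf_jets a b : jets_below 8 (einstein_nf a b) = true.
Proof.
  assert (Hr : jets_below 8 (ricci_nf a b) = true).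
  { apply forallb_nth; [|reflexivity]. apply (forallb_nth (forallb (jets_below 8))); [|reflexivity].
    vm_compute. reflexivity. }
  simpl. rewrite Hr.
  destruct a as [|[|[|[|a]]]]; destruct b as [|[|[|[|b]]]]; vm_compute; reflexivity.
Qed.

(* Only slots 0-7 are assumed smooth: the frame vector [e] (slots 8, 9) is evaluated
   but never differentiated, which is why [jets_below 8] guards differentiation. *)
Definition fluid_env (g00 g01 g11 Rr u0 u1 rho p e0 e1 : R -> R -> R) : env :=
  fun k => match k with
           | 0 => g00 | 1 => g01 | 2 => g11 | 3 => Rr | 4 => u0 | 5 => u1
           | 6 => rho | 7 => p | 8 => e0 | 9 => e1 | _ => fun _ _ => 0%R
           end%nat.

Definition radiusX : expr := XJet 3 0 0.
Definition uX (a : nat) : expr := match a with 0 => XJet 4 0 0 | 1 => XJet 5 0 0 | _ => XNum 0 end%nat.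
Definition rhoX : expr := XJet 6 0 0.
Definition pX : expr := XJet 7 0 0.
Definition eX (a : nat) : expr := match a with 0 => XJet 8 0 0 | 1 => XJet 9 0 0 | _ => XNum 0 end%nat.

Definition dirX (v : nat -> expr) (f : expr) : expr := sum4X (fun c => v c * dexpr c f)%X.
Definition gdotX (v w : nat -> expr) : expr :=
  sum4X (fun a => sum4X (fun b => metricX a b * v a * w b))%X.
Definition divgX (v : nat -> expr) : expr :=
  sum4X (fun a => dexpr a (v a) + sum4X (fun b => christoffel_nf a a b * v b))%X.

Definition orbit_riemX : expr := riemX 2 3 2 3.
(** [1 / (g22 g33 - g23^2)] *)
Definition orbit_area_invX : expr := (XInvR * XInvR * (XInvR * XInvR) * (XInvSin * XInvSin))%X.

Definition misner_sharp_coordX : expr :=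
  (XNum (-1 # 2) * (radiusX * radiusX * radiusX) * (orbit_riemX * orbit_area_invX))%X.

(** [KN(A, g)(d_2, d_3, d_2, d_3)] *)
Definition orbit_knX (A : nat -> nat -> expr) : expr :=
  (XNum (1 # 2) * (A 2%nat 2%nat * metricX 3 3 - A 2%nat 3%nat * metricX 3 2
                   + metricX 2 2 * A 3%nat 3%nat - metricX 2 3 * A 3%nat 2%nat))%X.

Definition misner_sharp_ricci_coordX : expr :=
  (XNum (-1 # 2) * (radiusX * radiusX * radiusX)
   * (orbit_knX (fun i j => ricci_nf i j - XNum (1 # 6) * scal_nf * metricX i j) * orbit_area_invX))%X.

Definition loweredX (v : nat -> expr) (a : nat) : expr := sum4X (fun b => metricX a b * v b)%X.

Definition einstein_fluidX (a b : nat) : expr :=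
  (XNum 8 * XPi * (rhoX * loweredX uX a * loweredX uX b
                   + pX * (loweredX uX a * loweredX uX b - metricX a b)))%X.

(** [g^{ac} (nabla_c T)_{ab}] *)
Definition divX (T : nat -> nat -> expr) (b : nat) : expr :=
  sum4X (fun a => sum4X (fun c => metric_invX a c *
    (dexpr c (T a b)
     - sum4X (fun d => christoffel_nf d c a * T d b + christoffel_nf d c b * T a d))))%X.

Definition contractX (v : nat -> expr) (w : nat -> expr) : expr := sum4X (fun a => v a * w a)%X.

Definition misner_sharpX : expr :=
  (XNum (1 # 2) * radiusX * (XNum 1 + sum2X (fun A => sum2X (fun B =>
     metric_invX A B * dexpr A radiusX * dexpr B radiusX))))%X.

Definition grad_misner_sharpX (T : nat -> nat -> expr) (A : nat) : expr :=
  (XNum (-1 # 2) * (radiusX * radiusX) *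
   (sum2X (fun B => sum2X (fun C => T A B * metric_invX B C * dexpr C radiusX))
    - dexpr A radiusX * sum2X (fun B => sum2X (fun C => metric_invX B C * T B C))))%X.

(** [Ric = T - tr(T) g / 2] and [Scal = - tr T] for the Einstein tensor [T]. *)
Definition misner_sharp_ricci_ofX (T : nat -> nat -> expr) : expr :=
  (XNum (-1 # 2) * (radiusX * radiusX * radiusX)
   * (orbit_knX (fun i j => T i j - XNum (1 # 2) * traceX T * metricX i j
                            + XNum (1 # 6) * traceX T * metricX i j) * orbit_area_invX))%X.

Definition normX : expr := gdotX uX uX.
Definition expansionX : expr := divgX uX.
Definition r3rhoX : expr := (radiusX * radiusX * radiusX * rhoX)%X.
Definition four_pi_thirdX : expr := (XNum (4 # 3) * XPi)%X.

Lemma misner_sharp_coord_eqb : expr_eqb misner_sharp_coordX misner_sharpX = true.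
Proof. vm_compute. reflexivity. Qed.

Lemma contracted_bianchi_eqb b : (b < 2)%nat -> expr_eqb (divX einstein_nf b) (XNum 0) = true.
Proof. intros Hb. destruct b as [|[|b]]; [vm_compute; reflexivity .. | lia]. Qed.

Lemma dir_misner_sharp_eqb vX : vX = uX \/ vX = eX ->
  expr_eqb (dirX vX misner_sharpX) (contractX vX (grad_misner_sharpX einstein_nf)) = true.
Proof. intros [-> | ->]; vm_compute; reflexivity. Qed.

Lemma misner_sharp_ricci_eqb :
  expr_eqb misner_sharp_ricci_coordX (misner_sharp_ricci_ofX einstein_nf) = true.
Proof. vm_compute. reflexivity. Qed.

Lemma fluid_divergence_eqb :
  expr_eqb (contractX uX (divX einstein_fluidX))
    (XNum 8 * XPi * (normX * (dirX uX rhoX + dirX uX pX) - dirX uX pX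
       + (rhoX + pX) * expansionX * normX + XNum (1 # 2) * (rhoX + pX) * dirX uX normX))%X = true.
Proof. vm_compute. reflexivity. Qed.

Lemma grad_misner_sharp_u_eqb :
  expr_eqb (contractX uX (grad_misner_sharpX einstein_fluidX))
    (XNum (-4) * XPi * (radiusX * radiusX * (pX * dirX uX radiusX)))%X = true.
Proof. vm_compute. reflexivity. Qed.

Lemma grad_misner_sharp_e_eqb :
  expr_eqb (contractX eX (grad_misner_sharpX einstein_fluidX))
    (XNum (-4) * XPi * (radiusX * radiusX *
      (- (rhoX * dirX eX radiusX) + gdotX uX eX * dirX uX radiusX * (rhoX + pX)
       - dirX eX radiusX * (rhoX + pX) * (normX - XNum 1))))%X = true.
Proof. vm_compute. reflexivity. Qed.

Lemma misner_sharp_ricci_fluid_eqb :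
  expr_eqb (misner_sharp_ricci_ofX einstein_fluidX)
    (four_pi_thirdX * r3rhoX + four_pi_thirdX * (radiusX * radiusX * radiusX)
       * ((rhoX + pX) * (normX - XNum 1)))%X = true.
Proof. vm_compute. reflexivity. Qed.

Lemma dir_r3rho_eqb vX : vX = uX \/ vX = eX ->
  expr_eqb (dirX vX (misner_sharpX - four_pi_thirdX * r3rhoX))
    (dirX vX misner_sharpX - four_pi_thirdX * (XNum 3 * (radiusX * radiusX) * rhoX * dirX vX radiusX
                                             + radiusX * radiusX * radiusX * dirX vX rhoX))%X = true
  /\ expr_eqb (dirX vX (four_pi_thirdX * r3rhoX)) (four_pi_thirdX * dirX vX r3rhoX)%X = true.
Proof. intros [-> | ->]; split; vm_compute; reflexivity. Qed.

Lemma sum4_ext (f f' : nat -> R) : (forall i, (i < 4)%nat -> f i = f' i) -> sum4 f = sum4 f'.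
Proof. intros H. unfold sum4. rewrite !H by lia. reflexivity. Qed.

Lemma metricX_jets a b : jets_below 8 (metricX a b) = true.
Proof. destruct a as [|[|[|[|a]]]]; destruct b as [|[|[|[|b]]]]; reflexivity. Qed.

Lemma eval_sum4X E f y : eval E (sum4X f) y = sum4 (fun i => eval E (f i) y).
Proof. reflexivity. Qed.

Lemma uX_jets a : jets_below 8 (uX a) = true.
Proof. destruct a as [|[|a]]; reflexivity. Qed.

Definition tensorX_agree (E : env) (T1 T2 : nat -> nat -> expr) (z : pt) : Prop :=
  forall a b, (a < 4)%nat -> (b < 4)%nat -> eval E (T1 a b) z = eval E (T2 a b) z.

Lemma grad_misner_sharpX_ext E T1 T2 z vX : tensorX_agree E T1 T2 z ->
  eval E (contractX vX (grad_misner_sharpX T1)) z = eval E (contractX vX (grad_misner_sharpX T2)) z.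
Proof.
  intros H. unfold contractX, sum4X, grad_misner_sharpX, sum2X. cbn [eval].
  rewrite !H by lia. reflexivity.
Qed.

Lemma misner_sharp_ricci_ofX_ext E T1 T2 z : tensorX_agree E T1 T2 z ->
  eval E (misner_sharp_ricci_ofX T1) z = eval E (misner_sharp_ricci_ofX T2) z.
Proof.
  intros H.
  assert (Htr : eval E (traceX T1) z = eval E (traceX T2) z).
  { unfold traceX. rewrite !eval_sum4X. apply sum4_ext. intros b Hb.
    rewrite !eval_sum4X. apply sum4_ext. intros d Hd. cbn [eval]. rewrite H by auto. reflexivity. }
  unfold misner_sharp_ricci_ofX, orbit_knX. cbn [eval]. rewrite !Htr, !H by lia. reflexivity.
Qed.

Lemma divX_ext E T1 T2 x b : tensorX_agree E T1 T2 x ->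
  (forall c a b, (a < 4)%nat -> (b < 4)%nat ->
     eval E (dexpr c (T1 a b)) x = eval E (dexpr c (T2 a b)) x) ->
  (b < 4)%nat -> eval E (divX T1 b) x = eval E (divX T2 b) x.
Proof.
  intros H HD Hb. unfold divX. rewrite !eval_sum4X. apply sum4_ext. intros a Ha.
  rewrite !eval_sum4X. apply sum4_ext. intros c Hc. cbn [eval]. rewrite HD by auto.
  do 3 f_equal. rewrite !eval_sum4X. apply sum4_ext. intros d Hd. cbn [eval].
  rewrite !H by auto. reflexivity.
Qed.

Section SphericalFluid.
Variables (V : R -> R -> Prop) (g00 g01 g11 Rr u0 u1 rho p e0 e1 : R -> R -> R).
Hypothesis HO : open2 V.
Hypotheses (Sg00 : smooth_on V g00) (Sg01 : smooth_on V g01) (Sg11 : smooth_on V g11)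
  (SRr : smooth_on V Rr) (Su0 : smooth_on V u0) (Su1 : smooth_on V u1)
  (Srho : smooth_on V rho) (Sp : smooth_on V p).
Hypothesis HDet : forall t r, V t r -> g00 t r * g11 t r - g01 t r ^ 2 < 0.
Hypothesis HRp : forall t r, V t r -> 0 < Rr t r.

Let E := fluid_env g00 g01 g11 Rr u0 u1 rho p e0 e1.
Let g := metric g00 g01 g11 Rr.
Let gi := metric_inv g00 g01 g11 Rr.

Lemma regular_at_dom4 y : dom4 V y -> regular_at E y.
Proof.
  intros [Hv [H1 H2]]. unfold regular_at, det_base. simpl. split; [|split].
  - specialize (HDet _ _ Hv). lra.
  - specialize (HRp _ _ Hv). lra.
  - apply Rgt_not_eq, sin_gt_0; lra.
Qed.

Lemma admissible_jets_below e y : dom4 V y -> jets_below 8 e = true -> admissible V E e y.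
Proof.
  intros Hd. destruct (regular_at_dom4 y Hd) as [n1 [n2 n3]].
  induction e as [f i j| | | | | | | |a IHa b IHb|a IHa b IHb|a IHa]; simpl; intros H;
    repeat rewrite Bool.andb_true_iff in H; try tauto.
  - apply Nat.ltb_lt in H.
    destruct f as [|[|[|[|[|[|[|[|f]]]]]]]]; simpl; auto; lia.
Qed.

Lemma pd_expr (f : pt -> R) (F : expr) k y : dom4 V y ->
  (forall z, dom4 V z -> f z = eval E F z) -> jets_below 8 F = true ->
  pd k f y = eval E (dexpr k F) y.
Proof.
  intros Hd Hf HF. rewrite (pd_ext_dom V HO f (eval E F) y k Hd Hf).
  apply (pd_eval V E HO); auto. apply admissible_jets_below; auto.
Qed.

Lemma dir_expr (v : nat -> pt -> R) (vX : nat -> expr) (f : pt -> R) (F : expr) y : dom4 V y ->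
  (forall a, v a y = eval E (vX a) y) -> (forall z, dom4 V z -> f z = eval E F z) ->
  jets_below 8 F = true -> dir v f y = eval E (dirX vX F) y.
Proof.
  intros Hd Hv Hf HF. unfold dir, dirX, sum4X, sum4. cbn [eval].
  rewrite !Hv, !(pd_expr f F) by assumption. reflexivity.
Qed.

Lemma expr_eqb_dom4 a b y : dom4 V y -> expr_eqb a b = true -> eval E a y = eval E b y.
Proof. intros Hd. apply expr_eqb_sound, regular_at_dom4, Hd. Qed.

Lemma simplify_dom4 e y : dom4 V y -> eval E (simplify e) y = eval E e y.
Proof. intros Hd. apply eval_simplify, regular_at_dom4, Hd. Qed.

Lemma metric_eval a b z : g a b z = eval E (metricX a b) z.
Proof.
  unfold g, metric.
  destruct a as [|[|[|[|a]]]]; destruct b as [|[|[|[|b]]]]; simpl; unfold jet, Q2R; simpl; ring.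
Qed.

Lemma metric_inv_eval a b z : dom4 V z -> gi a b z = eval E (metric_invX a b) z.
Proof.
  intros Hz. destruct (regular_at_dom4 z Hz) as [H1 [H2 H3]].
  unfold gi, metric_inv, det_base in *. simpl in H1, H2.
  destruct a as [|[|[|[|a]]]]; destruct b as [|[|[|[|b]]]]; simpl; unfold det_base, jet, Q2R; simpl;
    try field; auto.
Qed.

Lemma Gam_eval a b c y : dom4 V y -> (a < 4)%nat -> (b < 4)%nat -> (c < 4)%nat ->
  Gam g gi a b c y = eval E (christoffel_nf a b c) y.
Proof.
  intros Hd Ha Hb Hc. rewrite christoffel_nf_eq, simplify_dom4 by auto.
  unfold Gam, christoffelX. cbn [eval]. rewrite eval_sum4X.
  rewrite Q2R_half. f_equal.
  apply sum4_ext. intros d Hd'. cbn [eval].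
  rewrite metric_inv_eval by auto.
  rewrite !(pd_expr _ (metricX _ _)) by
    (auto using metric_eval, metricX_jets).
  ring.
Qed.

Lemma RiemUp_eval e b c d y : dom4 V y -> (e < 4)%nat -> (b < 4)%nat -> (c < 4)%nat -> (d < 4)%nat ->
  RiemUp g gi e b c d y = eval E (riem_upX e b c d) y.
Proof.
  intros Hd He Hb Hc Hdd. unfold RiemUp, riem_upX. cbn [eval].
  rewrite !(pd_expr _ (christoffel_nf _ _ _))
    by (auto using christoffel_nf_jets; intros; apply Gam_eval; auto).
  rewrite eval_sum4X. f_equal. apply sum4_ext. intros f Hf. cbn [eval]. rewrite !Gam_eval by auto.
  reflexivity.
Qed.

Lemma Riem_eval a b c d y : dom4 V y -> (b < 4)%nat -> (c < 4)%nat -> (d < 4)%nat ->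
  Riem g gi a b c d y = eval E (riemX a b c d) y.
Proof.
  intros Hd Hb Hc Hdd. unfold Riem, riemX. rewrite eval_sum4X. apply sum4_ext. intros e He.
  cbn [eval]. rewrite metric_eval, RiemUp_eval by auto. reflexivity.
Qed.

Lemma Ric_eval b d y : dom4 V y -> (b < 4)%nat -> (d < 4)%nat ->
  Ric g gi b d y = eval E (ricci_nf b d) y.
Proof.
  intros Hd Hb Hdd. rewrite ricci_nf_eq, simplify_dom4 by auto.
  unfold Ric, ricciX. rewrite eval_sum4X. apply sum4_ext. intros a Ha.
  rewrite eval_sum4X. apply sum4_ext. intros c Hc. cbn [eval].
  rewrite metric_inv_eval, Riem_eval by auto. reflexivity.
Qed.

Lemma Scal_eval y : dom4 V y -> Scal g gi y = eval E scal_nf y.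
Proof.
  intros Hd. rewrite scal_nf_eq, simplify_dom4 by auto.
  unfold Scal, traceX. rewrite eval_sum4X. apply sum4_ext. intros b Hb.
  rewrite eval_sum4X. apply sum4_ext. intros d Hdd. cbn [eval].
  rewrite metric_inv_eval, Ric_eval by auto. reflexivity.
Qed.

Lemma Ein_eval a b y : dom4 V y -> (a < 4)%nat -> (b < 4)%nat ->
  Ein g gi a b y = eval E (einstein_nf a b) y.
Proof.
  intros Hd Ha Hb. unfold Ein, einstein_nf. cbn [eval].
  rewrite Ric_eval, Scal_eval, metric_eval, Q2R_half by auto. ring.
Qed.

Lemma orbit_area_inv_eval y : dom4 V y ->
  / (g 2%nat 2%nat y * g 3%nat 3%nat y - g 2%nat 3%nat y ^ 2) = eval E orbit_area_invX y.
Proof.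
  intros Hd. destruct (regular_at_dom4 y Hd) as [_ [n2 n3]]. simpl in n2.
  unfold g, metric. simpl. unfold jet. simpl. field. auto.
Qed.

Lemma radiusX_eval z : eval E radiusX z = lift Rr z.
Proof. reflexivity. Qed.

Lemma MSE_eval y : dom4 V y -> MSE g gi Rr y = eval E misner_sharp_coordX y.
Proof.
  intros Hd. unfold MSE, orbitK, Rdiv. rewrite orbit_area_inv_eval by auto.
  unfold orbit_riemX. rewrite Riem_eval by (auto; lia).
  unfold misner_sharp_coordX, orbit_riemX. cbn [eval]. rewrite Q2R_mhalf, radiusX_eval. ring.
Qed.

Lemma MSE_R_eval y : dom4 V y -> MSE_R g gi Rr y = eval E misner_sharp_ricci_coordX y.
Proof.
  intros Hd. unfold MSE_R, orbitK, Rdiv. rewrite orbit_area_inv_eval by auto.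
  unfold RicciPart, KN. rewrite !Ric_eval, !Scal_eval by (auto; lia). rewrite !metric_eval.
  unfold misner_sharp_ricci_coordX, orbit_knX. cbn [eval].
  rewrite Q2R_mhalf, Q2R_half, radiusX_eval.
  replace (Q2R (1 # 6)) with (/ 6) by (unfold Q2R; simpl; field).
  ring.
Qed.

Lemma bvec_u_eval a z : bvec u0 u1 a z = eval E (uX a) z.
Proof. destruct a as [|[|a]]; simpl; try reflexivity. symmetry. apply Q2R_0. Qed.

Lemma bvec_e_eval a z : bvec e0 e1 a z = eval E (eX a) z.
Proof. destruct a as [|[|a]]; simpl; try reflexivity. symmetry. apply Q2R_0. Qed.

Lemma gdot_eval (v w : nat -> pt -> R) (vX wX : nat -> expr) z :
  (forall a, v a z = eval E (vX a) z) -> (forall a, w a z = eval E (wX a) z) ->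
  gdot g v w z = eval E (gdotX vX wX) z.
Proof.
  intros Hv Hw. unfold gdot, gdotX. rewrite eval_sum4X. apply sum4_ext. intros a Ha.
  rewrite eval_sum4X. apply sum4_ext. intros b Hb. cbn [eval]. rewrite metric_eval, Hv, Hw.
  reflexivity.
Qed.

Lemma Tfluid_eval a b z :
  8 * PI * Tfluid g (bvec u0 u1) (lift rho) (lift p) a b z = eval E (einstein_fluidX a b) z.
Proof.
  assert (Hl : forall c, lower g (bvec u0 u1) c z = eval E (loweredX uX c) z).
  { intros c. unfold lower, loweredX. rewrite eval_sum4X. apply sum4_ext. intros d Hd.
    cbn [eval]. rewrite metric_eval, bvec_u_eval. reflexivity. }
  unfold Tfluid, einstein_fluidX. cbn [eval]. rewrite !Hl, metric_eval.
  rewrite Q2R_int. reflexivity.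
Qed.

Lemma divg_eval y : dom4 V y -> divg g gi (bvec u0 u1) y = eval E expansionX y.
Proof.
  intros Hd. unfold divg, expansionX, divgX. rewrite eval_sum4X. apply sum4_ext. intros a Ha.
  cbn [eval]. rewrite (pd_expr _ (uX a)) by auto using bvec_u_eval, uX_jets.
  f_equal. rewrite eval_sum4X. apply sum4_ext. intros b Hb. cbn [eval].
  rewrite Gam_eval, bvec_u_eval by auto. reflexivity.
Qed.

Hypothesis Hunit : forall z, dom4 V z -> gdot g (bvec u0 u1) (bvec u0 u1) z = 1.
Hypothesis HEin : forall z a b, dom4 V z -> (a < 4)%nat -> (b < 4)%nat ->
  Ein g gi a b z = 8 * PI * Tfluid g (bvec u0 u1) (lift rho) (lift p) a b z.

Lemma einstein_fluid_agree z : dom4 V z -> tensorX_agree E einstein_nf einstein_fluidX z.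
Proof. intros Hz a b Ha Hb. rewrite <- Ein_eval, <- Tfluid_eval by auto. apply HEin; auto. Qed.

Lemma einstein_fluidX_jets a b : jets_below 8 (einstein_fluidX a b) = true.
Proof. destruct a as [|[|[|[|a]]]]; destruct b as [|[|[|[|b]]]]; reflexivity. Qed.

Lemma fluid_divergence_free x b : dom4 V x -> (b < 2)%nat -> eval E (divX einstein_fluidX b) x = 0.
Proof.
  intros Hx Hb. rewrite <- (divX_ext E einstein_nf einstein_fluidX x b).
  - rewrite (expr_eqb_dom4 _ _ x Hx (contracted_bianchi_eqb b Hb)). apply Q2R_0.
  - apply einstein_fluid_agree, Hx.
  - intros c a b' Ha Hb'.
    rewrite <- (pd_expr (eval E (einstein_nf a b')) _ c x),
      <- (pd_expr (eval E (einstein_fluidX a b')) _ c x)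
      by auto using einstein_fluidX_jets, einstein_nf_jets.
    apply (pd_ext_dom V HO); auto. intros z Hz. apply einstein_fluid_agree; auto.
  - lia.
Qed.

Lemma rhoX_eval z : eval E rhoX z = lift rho z.
Proof. reflexivity. Qed.

Lemma pX_eval z : eval E pX z = lift p z.
Proof. reflexivity. Qed.

Lemma normX_eval z : dom4 V z -> eval E normX z = 1.
Proof. intros Hz. rewrite <- (Hunit z Hz). symmetry. apply gdot_eval; intros; apply bvec_u_eval. Qed.

Lemma dir_u_normX x : dom4 V x -> eval E (dirX uX normX) x = 0.
Proof.
  intros Hx. rewrite <- (dir_expr (bvec u0 u1) uX (fun _ => 1) normX x Hx)
    by (auto using bvec_u_eval; intros; symmetry; apply normX_eval; auto).
  unfold dir, pd, sum4. rewrite !Derive_const. ring.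
Qed.

Lemma energy_equation x : dom4 V x ->
  dir (bvec u0 u1) (lift rho) x = - (lift rho x + lift p x) * divg g gi (bvec u0 u1) x.
Proof.
  intros Hx.
  assert (H0 : eval E (contractX uX (divX einstein_fluidX)) x = 0).
  { unfold contractX, sum4X. cbn [eval uX]. rewrite !fluid_divergence_free by (auto; lia).
    rewrite Q2R_0. ring. }
  rewrite (expr_eqb_dom4 _ _ x Hx fluid_divergence_eqb) in H0. cbn [eval] in H0.
  rewrite normX_eval, dir_u_normX, rhoX_eval, pX_eval in H0 by exact Hx.
  rewrite divg_eval, (dir_expr _ uX _ rhoX) by (auto using bvec_u_eval).
  rewrite Q2R_int in H0.
  assert (H1 : 8 * PI * (eval E (dirX uX rhoX) x + (lift rho x + lift p x) * eval E expansionX x) = 0)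
    by (rewrite <- H0; ring).
  apply Rmult_integral in H1. destruct H1 as [H1|H1]; [pose proof PI_RGT_0; lra | lra].
Qed.

Lemma misner_sharpX_eval z : dom4 V z -> MSE g gi Rr z = eval E misner_sharpX z.
Proof.
  intros Hz. rewrite MSE_eval by exact Hz. apply expr_eqb_dom4, misner_sharp_coord_eqb; exact Hz.
Qed.

Lemma dir_misner_sharp v vX x : dom4 V x -> vX = uX \/ vX = eX ->
  (forall a, v a x = eval E (vX a) x) ->
  dir v (MSE g gi Rr) x = eval E (contractX vX (grad_misner_sharpX einstein_fluidX)) x.
Proof.
  intros Hx HvX Hv.
  rewrite (dir_expr v vX _ misner_sharpX) by (auto using misner_sharpX_eval).
  rewrite (expr_eqb_dom4 _ _ x Hx (dir_misner_sharp_eqb vX HvX)).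
  apply grad_misner_sharpX_ext, einstein_fluid_agree, Hx.
Qed.

Lemma dir_u_misner_sharp x : dom4 V x ->
  dir (bvec u0 u1) (MSE g gi Rr) x = -4 * PI * lift Rr x ^ 2 * lift p x * dir (bvec u0 u1) (lift Rr) x.
Proof.
  intros Hx. rewrite (dir_misner_sharp _ uX), (expr_eqb_dom4 _ _ x Hx grad_misner_sharp_u_eqb)
    by (auto using bvec_u_eval).
  rewrite (dir_expr _ uX (lift Rr) radiusX) by (auto using bvec_u_eval).
  cbn [eval]. rewrite radiusX_eval, pX_eval, Q2R_int. ring.
Qed.

Lemma dir_e_misner_sharp x : dom4 V x -> gdot g (bvec u0 u1) (bvec e0 e1) x = 0 ->
  dir (bvec e0 e1) (MSE g gi Rr) x = 4 * PI * lift Rr x ^ 2 * lift rho x * dir (bvec e0 e1) (lift Rr) x.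
Proof.
  intros Hx Hue. rewrite (gdot_eval _ _ uX eX) in Hue by (intros; auto using bvec_u_eval, bvec_e_eval).
  rewrite (dir_misner_sharp _ eX), (expr_eqb_dom4 _ _ x Hx grad_misner_sharp_e_eqb)
    by (auto using bvec_e_eval).
  rewrite (dir_expr _ eX (lift Rr) radiusX) by (auto using bvec_e_eval).
  cbn [eval]. rewrite Hue, normX_eval, radiusX_eval, rhoX_eval by exact Hx.
  rewrite !Q2R_int. ring.
Qed.

Lemma misner_sharp_ricci_eval z : dom4 V z -> MSE_R g gi Rr z = eval E (four_pi_thirdX * r3rhoX)%X z.
Proof.
  intros Hz. rewrite MSE_R_eval, (expr_eqb_dom4 _ _ z Hz misner_sharp_ricci_eqb) by exact Hz.
  rewrite (misner_sharp_ricci_ofX_ext E _ einstein_fluidX) by (apply einstein_fluid_agree, Hz).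
  rewrite (expr_eqb_dom4 _ _ z Hz misner_sharp_ricci_fluid_eqb). cbn [eval].
  rewrite normX_eval, Q2R_int by exact Hz. ring.
Qed.

Lemma r3rhoX_eval z : eval E r3rhoX z = lift Rr z ^ 3 * lift rho z.
Proof. unfold r3rhoX. cbn [eval]. rewrite radiusX_eval, rhoX_eval. ring. Qed.

Lemma four_pi_thirdX_eval z : eval E four_pi_thirdX z = 4 / 3 * PI.
Proof. unfold four_pi_thirdX. cbn [eval]. unfold Q2R. simpl. field. Qed.

Lemma dir_misner_sharp_ricci v vX x : dom4 V x -> vX = uX \/ vX = eX ->
  (forall a, v a x = eval E (vX a) x) ->
  dir v (MSE_R g gi Rr) x = 4 / 3 * PI * dir v (fun y => lift Rr y ^ 3 * lift rho y) x.
Proof.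
  intros Hx HvX Hv.
  rewrite (dir_expr v vX _ (four_pi_thirdX * r3rhoX)) by (auto using misner_sharp_ricci_eval).
  rewrite (expr_eqb_dom4 _ _ x Hx (proj2 (dir_r3rho_eqb vX HvX))). cbn [eval].
  rewrite four_pi_thirdX_eval, (dir_expr v vX _ r3rhoX) by (auto; intros; symmetry; apply r3rhoX_eval).
  reflexivity.
Qed.

Lemma dir_misner_sharp_weyl v vX x : dom4 V x -> vX = uX \/ vX = eX ->
  (forall a, v a x = eval E (vX a) x) ->
  dir v (MSE_W g gi Rr) x = dir v (MSE g gi Rr) x
    - 4 / 3 * PI * (3 * lift Rr x ^ 2 * lift rho x * dir v (lift Rr) x
                    + lift Rr x ^ 3 * dir v (lift rho) x).
Proof.
  intros Hx HvX Hv.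
  rewrite (dir_expr v vX _ (misner_sharpX - four_pi_thirdX * r3rhoX)).
  - rewrite (expr_eqb_dom4 _ _ x Hx (proj1 (dir_r3rho_eqb vX HvX))). cbn [eval].
    rewrite four_pi_thirdX_eval, radiusX_eval, rhoX_eval.
    rewrite (dir_expr v vX (MSE g gi Rr) misner_sharpX),
      (dir_expr v vX (lift Rr) radiusX), (dir_expr v vX (lift rho) rhoX)
      by (auto using misner_sharpX_eval).
    rewrite Q2R_int. ring.
  - exact Hx.
  - exact Hv.
  - intros z Hz. transitivity (MSE g gi Rr z - MSE_R g gi Rr z).
    + unfold MSE_W, MSE, MSE_R, orbitK, WeylPart, Rdiv. ring.
    + rewrite misner_sharpX_eval, misner_sharp_ricci_eval by exact Hz. reflexivity.
  - reflexivity.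
Qed.

Lemma dir_u_misner_sharp_weyl x : dom4 V x ->
  dir (bvec u0 u1) (MSE_W g gi Rr) x
  = -4 * PI * lift Rr x ^ 3 * (lift rho x + lift p x) * shear g gi (bvec u0 u1) Rr x.
Proof.
  intros Hx. assert (HR : 0 < lift Rr x) by (apply HRp, Hx).
  rewrite (dir_misner_sharp_weyl _ uX), dir_u_misner_sharp, energy_equation
    by (auto using bvec_u_eval).
  unfold shear. field. lra.
Qed.

Lemma dir_e_misner_sharp_weyl x : dom4 V x -> gdot g (bvec u0 u1) (bvec e0 e1) x = 0 ->
  dir (bvec e0 e1) (MSE_W g gi Rr) x = -4 / 3 * PI * lift Rr x ^ 3 * dir (bvec e0 e1) (lift rho) x.
Proof.
  intros Hx Hue.
  rewrite (dir_misner_sharp_weyl _ eX), dir_e_misner_sharp by (auto using bvec_e_eval).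
  field.
Qed.

Lemma misner_sharp_derivatives x : dom4 V x -> gdot g (bvec u0 u1) (bvec e0 e1) x = 0 ->
  dir (bvec u0 u1) (MSE g gi Rr) x
    = -4 * PI * lift Rr x ^ 2 * lift p x * dir (bvec u0 u1) (lift Rr) x /\
  dir (bvec e0 e1) (MSE g gi Rr) x
    = 4 * PI * lift Rr x ^ 2 * lift rho x * dir (bvec e0 e1) (lift Rr) x /\
  dir (bvec u0 u1) (MSE_W g gi Rr) x
    = -4 * PI * lift Rr x ^ 3 * (lift rho x + lift p x) * shear g gi (bvec u0 u1) Rr x /\
  dir (bvec e0 e1) (MSE_W g gi Rr) x = -4 / 3 * PI * lift Rr x ^ 3 * dir (bvec e0 e1) (lift rho) x /\
  dir (bvec u0 u1) (MSE_R g gi Rr) x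
    = 4 / 3 * PI * dir (bvec u0 u1) (fun y => lift Rr y ^ 3 * lift rho y) x /\
  dir (bvec e0 e1) (MSE_R g gi Rr) x
    = 4 / 3 * PI * dir (bvec e0 e1) (fun y => lift Rr y ^ 3 * lift rho y) x.
Proof.
  intros Hx Hue. repeat split.
  - apply dir_u_misner_sharp, Hx.
  - apply dir_e_misner_sharp; assumption.
  - apply dir_u_misner_sharp_weyl, Hx.
  - apply dir_e_misner_sharp_weyl; assumption.
  - apply (dir_misner_sharp_ricci _ uX); auto using bvec_u_eval.
  - apply (dir_misner_sharp_ricci _ eX); auto using bvec_e_eval.
Qed.

End SphericalFluid.

Lemma scaled_eq_0_iff (X c Y : R) : c <> 0 -> X = c * Y -> (X = 0 <-> Y = 0).
Proof.
  intros Hc ->. split; intros H; [|rewrite H; ring].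
  destruct (Rmult_integral _ _ H) as [H'|H']; [contradiction | exact H'].
Qed.

Ltac split_product_neq_0 :=
  repeat match goal with |- _ * _ <> 0 => apply Rmult_integral_contrapositive_currified end.

Theorem theorem3
  (V : R -> R -> Prop) (g00 g01 g11 Rr u0 u1 e0 e1 tau0 tau1 rho p : R -> R -> R) :
  let g := metric g00 g01 g11 Rr in
  let gi := metric_inv g00 g01 g11 Rr in
  let u := bvec u0 u1 in
  let e := bvec e0 e1 in
  let tau := bvec tau0 tau1 in
  let R4 := lift Rr in
  let rho4 := lift rho in
  let p4 := lift p in
  open2 V ->
  (* smoothness of the data on B *)
  smooth_on V g00 -> smooth_on V g01 -> smooth_on V g11 -> smooth_on V Rr ->
  smooth_on V u0 -> smooth_on V u1 -> smooth_on V rho -> smooth_on V p ->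
  smooth_on V tau0 -> smooth_on V tau1 ->
  (* (B, g_B) is Lorentzian and R > 0 *)
  (forall t r, V t r -> g00 t r * g11 t r - g01 t r ^ 2 < 0) ->
  (forall t r, V t r -> 0 < Rr t r) ->
  (* tau is a timelike time orientation; u is a future-pointing unit timelike field *)
  (forall x, dom4 V x -> gdot g tau tau x > 0) ->
  (forall x, dom4 V x -> gdot g u u x = 1) ->
  (forall x, dom4 V x -> gdot g u tau x > 0) ->
  (* e : unit, tangent to B, orthogonal to u, pointing towards increasing R *)
  (forall x, dom4 V x -> gdot g e e x = -1) ->
  (forall x, dom4 V x -> gdot g u e x = 0) ->
  (forall x, dom4 V x -> dir e R4 x > 0) ->
  (* Einstein's equation with perfect fluid, rho + p <> 0 *)
  (forall x a b, dom4 V x -> (a < 4)%nat -> (b < 4)%nat ->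
     Ein g gi a b x = 8 * PI * Tfluid g u rho4 p4 a b x) ->
  (forall x, dom4 V x -> rho4 x + p4 x <> 0) ->
  forall x, dom4 V x ->
  (* dR spacelike at x *)
  codot gi R4 x < 0 ->
  (dir u (MSE g gi Rr) x = 0 <-> p4 x = 0 \/ dir u R4 x = 0) /\
  (dir e (MSE g gi Rr) x = 0 <-> rho4 x = 0) /\
  (dir u (MSE_W g gi Rr) x = 0 <-> shear g gi u Rr x = 0) /\
  (dir e (MSE_W g gi Rr) x = 0 <-> dir e rho4 x = 0) /\
  ((dir u (MSE_R g gi Rr) x = 0 <-> dir u (fun y => R4 y ^ 3 * rho4 y) x = 0) /\
   (dir e (MSE_R g gi Rr) x = 0 <-> dir e (fun y => R4 y ^ 3 * rho4 y) x = 0)).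
Proof.
  intros g gi u e tau R4 rho4 p4 HO Sg00 Sg01 Sg11 SRr Su0 Su1 Srho Sp _ _ HDet HRp
    _ Hunit _ _ Hue HeR HEin Hrp x Hx _.
  subst g gi u e tau R4 rho4 p4.
  destruct (misner_sharp_derivatives V g00 g01 g11 Rr u0 u1 rho p e0 e1 HO
              Sg00 Sg01 Sg11 SRr Su0 Su1 Srho Sp HDet HRp Hunit HEin x Hx (Hue x Hx))
    as (Eu & Ee & EWu & EWe & ERu & ERe).
  pose proof PI_RGT_0 as HPI.
  assert (HR2 : 0 < lift Rr x ^ 2) by (apply pow_lt, HRp, Hx).
  assert (HR3 : 0 < lift Rr x ^ 3) by (apply pow_lt, HRp, Hx).
  specialize (HeR x Hx). specialize (Hrp x Hx).
  split; [|split; [|split; [|split]]].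
  - rewrite (scaled_eq_0_iff _ (-4 * PI * lift Rr x ^ 2) (lift p x * dir (bvec u0 u1) (lift Rr) x)).
    + split; [apply Rmult_integral | apply Rmult_eq_0_compat].
    + split_product_neq_0; lra.
    + rewrite Eu. ring.
  - apply (scaled_eq_0_iff _ (4 * PI * lift Rr x ^ 2 * dir (bvec e0 e1) (lift Rr) x)).
    + split_product_neq_0; lra.
    + rewrite Ee. ring.
  - apply (scaled_eq_0_iff _ (-4 * PI * lift Rr x ^ 3 * (lift rho x + lift p x))); [|exact EWu].
    split_product_neq_0; auto; lra.
  - apply (scaled_eq_0_iff _ (-4 / 3 * PI * lift Rr x ^ 3)); [|exact EWe].
    split_product_neq_0; lra.
  - assert (Hc : 4 / 3 * PI <> 0) by (split_product_neq_0; lra).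
    exact (conj (scaled_eq_0_iff _ _ _ Hc ERu) (scaled_eq_0_iff _ _ _ Hc ERe)).
Qed.
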